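(* Let $Q$ be a QNP. Any strong cyclic policy $\pi$ for the FOND problem $P=T(Q)$ is $P$-terminating.
   Context: A QNP $Q=\langle F,V,I,O,G\rangle$ has propositional variables $F$, numerical variables $V$, initial and goal sets $I,G$ of literals $p,\neg p$, $X=0$, $X>0$, and actions $a\in O$ with precondition $Pre(a)$, propositional effects $\mathit{Eff}(a)$, numerical effects $N(a)\subseteq\{Inc(X),Dec(X):X\in V\}$ (at most one per variable; $Dec(X)\in N(a)$ implies $X>0\in Pre(a)$). The FOND problem $T(Q)$: let $n=|F|+|V|$ and $Max=1+2^n$. Propositional variables: $F$, atoms $p_{X=0}$ ($X\in V$; $X=0$, $X>0$ denote $p_{X=0}$, $\neg p_{X=0}$), $in(X)$, $depth(d)$ ($0\le d\le|V|$), $index(X,d)$ ($1\le d\le|V|$), and counters $c(d)$ ($0\le d\le|V|$), $c_T$ over $\{0,\dots,Max\}$ encoded in binary. Initial state: $I$ plus $depth(0)$, all counters $0$, other new atoms false. Goal $G$. Actions: $Push(X,d)$ ($0\le d\le|V|-1$): pre $\neg in(X),depth(d),c(d)<Max$; eff $in(X),index(X,d+1),depth(d+1),\neg depth(d),c(d):=c(d)+1,c(d+1):=0$. $Pop(X,d)$ ($1\le d\le|V|$): pre $in(X),index(X,d),depth(d)$; eff $\neg in(X),\neg index(X,d),\neg depth(d),depth(d-1)$. $Move$: pre $depth(0),c_T<Max$; eff $c_T:=c_T+1$. For $a\in O$ with no $Dec$ effect: action $a$ with pre $Pre(a)$ plus $\neg in(Y)$ for each $Inc(Y)\in N(a)$,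 eff $\mathit{Eff}(a)$ plus $Y>0$ for each $Inc(Y)\in N(a)$. For $a\in O$ with a $Dec$ effect, $X$ with $Dec(X)\in N(a)$, $1\le d\le|V|$: action $a(X,d)$ with pre $Pre(a)$, $\neg in(Y)$ for each $Inc(Y)\in N(a)$, $index(X,d)$; eff $\mathit{Eff}(a)$, $Y>0$ for each $Inc(Y)\in N(a)$, nondeterministic $Z>0\mid Z=0$ for each $Dec(Z)\in N(a)$, and $c(d'):=0$ for all $d\le d'\le|V|$. An action of $T(Q)$ is a $Dec(X)$ (resp. $Inc(X)$) action if it comes from an action $a\in O$ with $Dec(X)\in N(a)$ (resp. $Inc(X)\in N(a)$). A policy is a partial map from states to actions; a $\pi$-trajectory is a sequence from the initial state with $\pi(t_i)$ applicable in $t_i$ and $t_{i+1}$ a possible successor. $\pi$ is strong cyclic iff for every $\pi$-trajectory from the initial state to $t$ there is a $\pi$-trajectory from $t$ to a goal state. An infinite $\pi$-trajectory is terminating if some $X\in V$ has $\pi(t)$ a $Dec(X)$ action for some state $t$ occurring infinitely often and $\pi(t')$ not an $Inc(X)$ action for any state $t'$ occurring infinitely often; $\pi$ is $P$-terminating iff all its infinite $\pi$-trajectories are terminating. *)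

From HB Require Import structures.
From mathcomp Require Import all_boot.

Set Implicit Arguments.
Unset Strict Implicit.
Unset Printing Implicit Defensive.

Section QNP.
Variables (F V O : finType).

Inductive neff := Inc | Dec.

Definition isDecN (o : option neff) : bool := if o is Some Dec then true else false.
Definition isIncN (o : option neff) : bool := if o is Some Inc then true else false.

(** Literals: [inl (p, true)] = p, [inl (p, false)] = ¬p,
    [inr (X, true)] = X>0, [inr (X, false)] = X=0. *)
Definition lit := ((F * bool) + (V * bool))%type.

(** A QNP <F,V,I,O,G>: F, V, O are the finite types of propositional variables,
    numerical variables and actions.  [qN a X] is the (at most one) numerical
    effect of [a] on [X]. *)
Record qnp := QNP {
  qI   : {set lit};
  qG   : {set lit};
  qPre : O -> {set lit};
  qEff : O -> {set (F * bool)};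
  qN   : O -> V -> option neff }.

Definition qnp_wf (Q : qnp) : Prop :=
  forall a X, qN Q a X = Some Dec -> inr (X, true) \in qPre Q a.

Definition nV : nat := #|V|.
Definition Max : nat := 1 + 2 ^ (#|F| + #|V|).

(** States of T(Q): valuations of its atoms.
    sF: atoms of F; sZ X: atom p_{X=0}; sIn X: in(X);
    sDepth d: depth(d), 0<=d<=|V|;
    sIndex (X,d): index(X,d+1), i.e. index(X,d') for 1<=d'<=|V|;
    sC d: value of counter c(d), 0<=d<=|V|; sCT: value of c_T.
    Counters (binary-encoded in the paper) are represented by their value. *)
Record tstate := TState {
  sF : {ffun F -> bool};
  sZ : {ffun V -> bool};
  sIn : {ffun V -> bool};
  sDepth : {ffun 'I_nV.+1 -> bool};
  sIndex : {ffun (V * 'I_nV) -> bool};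
  sC : {ffun 'I_nV.+1 -> 'I_Max.+1};
  sCT : 'I_Max.+1 }.

(** Raw action names of T(Q):
    RPush X d   = Push(X,d),        0 <= d <= |V|-1
    RPop X d    = Pop(X,d+1),       1 <= d+1 <= |V|
    RMove       = Move
    RAct a      = a,                a ∈ O without Dec effect
    RDec a X d  = a(X,d+1),         Dec(X) ∈ N(a), 1 <= d+1 <= |V| *)
Inductive raction :=
  | RPush of V & 'I_nV
  | RPop of V & 'I_nV
  | RMove
  | RAct of O
  | RDec of O & V & 'I_nV.

Definition hasDec (Q : qnp) (a : O) : bool := [exists X, isDecN (qN Q a X)].

Definition valid (Q : qnp) (b : raction) : bool :=
  match b with
  | RAct a => ~~ hasDec Q a
  | RDec a X _ => isDecN (qN Q a X)
  | _ => true
  end.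

Definition taction (Q : qnp) := {b : raction | valid Q b}.

Definition lit_holds (t : tstate) (l : lit) : bool :=
  match l with
  | inl (p, b) => sF t p == b
  | inr (X, b) => sZ t X == ~~ b
  end.

Definition sat (t : tstate) (L : {set lit}) : Prop :=
  forall l, l \in L -> lit_holds t l.

Definition upd (T : finType) (R : Type) (f : {ffun T -> R}) (x : T) (v : R) :
  {ffun T -> R} := [ffun y => if y == x then v else f y].

Definition noInc (Q : qnp) (a : O) (t : tstate) : Prop :=
  forall Y, qN Q a Y = Some Inc -> sIn t Y = false.

Definition tpre (Q : qnp) (t : tstate) (b : raction) : Prop :=
  match b with
  | RPush X d => sIn t X = false /\ sDepth t (inord d) /\ sC t (inord d) < Max
  | RPop X d => sIn t X /\ sIndex t (X, d) /\ sDepth t (inord d.+1)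
  | RMove => sDepth t (inord 0) /\ sCT t < Max
  | RAct a => sat t (qPre Q a) /\ noInc Q a t
  | RDec a X d => [/\ sat t (qPre Q a), noInc Q a t & sIndex t (X, d)]
  end.

Definition qeff_rel (Q : qnp) (a : O) (t t' : tstate) : Prop :=
  [/\ (forall p b, (p, b) \in qEff Q a -> sF t' p = b),
      (forall p, (p, true) \notin qEff Q a -> (p, false) \notin qEff Q a ->
                 sF t' p = sF t p) &
      (forall Y, match qN Q a Y with
                 | Some Inc => sZ t' Y = false
                 | Some Dec => True
                 | None => sZ t' Y = sZ t Y
                 end)].

Definition teff (Q : qnp) (t : tstate) (b : raction) (t' : tstate) : Prop :=
  match b with
  | RPush X d =>
      t' = TState (sF t) (sZ t) (upd (sIn t) X true)
             (upd (upd (sDepth t) (inord d) false) (inord d.+1) true)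
             (upd (sIndex t) (X, d) true)
             (upd (upd (sC t) (inord d) (inord (sC t (inord d)).+1))
                  (inord d.+1) ord0)
             (sCT t)
  | RPop X d =>
      t' = TState (sF t) (sZ t) (upd (sIn t) X false)
             (upd (upd (sDepth t) (inord d.+1) false) (inord d) true)
             (upd (sIndex t) (X, d) false)
             (sC t) (sCT t)
  | RMove =>
      t' = TState (sF t) (sZ t) (sIn t) (sDepth t) (sIndex t) (sC t)
             (inord (sCT t).+1)
  | RAct a =>
      [/\ qeff_rel Q a t t', sIn t' = sIn t, sDepth t' = sDepth t,
          sIndex t' = sIndex t & sC t' = sC t /\ sCT t' = sCT t]
  | RDec a X d =>
      [/\ qeff_rel Q a t t', sIn t' = sIn t, sDepth t' = sDepth t,
          sIndex t' = sIndex t &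
          sC t' = [ffun e : 'I_nV.+1 => if (d < e)%N then ord0 else sC t e]
          /\ sCT t' = sCT t]
  end.

Definition succ (Q : qnp) (t : tstate) (b : taction Q) (t' : tstate) : Prop :=
  tpre Q t (sval b) /\ teff Q t (sval b) t'.

Definition init (Q : qnp) (t : tstate) : Prop :=
  [/\ sat t (qI Q), sIn t = [ffun=> false],
      sDepth t = [ffun e => e == ord0], sIndex t = [ffun=> false] &
      sC t = [ffun=> ord0] /\ sCT t = ord0].

Definition goal (Q : qnp) (t : tstate) : Prop := sat t (qG Q).

Definition policy (Q : qnp) := tstate -> option (taction Q).

Definition step (Q : qnp) (pi : policy Q) (t t' : tstate) : Prop :=
  ~ goal Q t /\ exists b, pi t = Some b /\ succ t b t'.

Definition ftraj (Q : qnp) (pi : policy Q) (tau : nat -> tstate) (n : nat) :=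
  forall i, i < n -> step pi (tau i) (tau i.+1).

Definition strong_cyclic (Q : qnp) (pi : policy Q) : Prop :=
  forall (tau : nat -> tstate) (n : nat),
    init Q (tau 0) -> ftraj pi tau n ->
    exists (sigma : nat -> tstate) (m : nat),
      [/\ sigma 0 = tau n, ftraj pi sigma m & goal Q (sigma m)].

Definition itraj (Q : qnp) (pi : policy Q) (tau : nat -> tstate) : Prop :=
  init Q (tau 0) /\ forall i, step pi (tau i) (tau i.+1).

Definition inf_often (tau : nat -> tstate) (t : tstate) : Prop :=
  forall n, exists m, n <= m /\ tau m = t.

Definition decX (Q : qnp) (X : V) (b : taction Q) : bool :=
  match sval b with
  | RAct a => isDecN (qN Q a X)
  | RDec a _ _ => isDecN (qN Q a X)
  | _ => false
  end.

Definition incX (Q : qnp) (X : V) (b : taction Q) : bool :=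
  match sval b with
  | RAct a => isIncN (qN Q a X)
  | RDec a _ _ => isIncN (qN Q a X)
  | _ => false
  end.

Definition terminating (Q : qnp) (pi : policy Q) (tau : nat -> tstate) : Prop :=
  exists X : V,
    (exists t b, [/\ inf_often tau t, pi t = Some b & decX X b]) /\
    (forall t b, inf_often tau t -> pi t = Some b -> ~~ incX X b).

Definition P_terminating (Q : qnp) (pi : policy Q) : Prop :=
  forall tau, itraj pi tau -> terminating pi tau.

End QNP.

From mathcomp Require Import all_boot zify.
From Stdlib Require Import Classical.

Set Implicit Arguments.
Unset Strict Implicit.
Unset Printing Implicit Defensive.

(* Since T(Q) has finitely many states, from some time N0 on every state of an
   infinite trajectory recurs infinitely often.  A counter that never
   decreases after N0 cannot strictly increase there: so Move never occurs
   after N0.  Let d0 be the least stack depth reached after N0; the stack up to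
   level d0 is frozen from N0 on.  If every Dec action a(X, d) after N0 had
   d > d0, the counter c(d0) would never be reset, hence no Push occurs at
   depth d0, the depth stays d0, and only the deterministic QNP actions without
   Dec effects remain applicable: the trajectory is then the only one from
   that point, so the goal that strong cyclicity provides lies on it, although
   the trajectory never stops.  Hence some a(X, d) with d <= d0 is applied at a
   recurring state; X sits in the frozen part of the stack, so in(X) holds in
   every recurring state and no Inc(X) action is applicable there. *)

Lemma ex_argmin_from (f : nat -> nat) N :
  exists2 m0, N <= m0 & forall m, N <= m -> f m0 <= f m.
Proof.
suff min_below v m : N <= m -> f m <= v ->
    exists2 m0, N <= m0 & forall m, N <= m -> f m0 <= f m.
  exact: (min_below (f N) N).
elim: v m => [|v IH] m hm hv.
  by exists m => // m' _; move: hv; rewrite leqn0 => /eqP->.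
case: (classic (exists2 m', N <= m' & f m' < f m)) => [[m' hm' lt_m'm]|no_lt].
  by apply: (IH m') => //; rewrite -ltnS (leq_trans lt_m'm hv).
exists m => // m' hm'; rewrite leqNgt; apply/negP => lt_m'm.
by apply: no_lt; exists m'.
Qed.

Lemma eventually_recurrent (T : finType) (u : nat -> T) :
  exists N, forall m, N <= m -> forall n, exists k, n <= k /\ u k = u m.
Proof.
suff [N HN] : exists N, forall m, N <= m -> u m \in enum T ->
    forall n, exists k, n <= k /\ u k = u m.
  by exists N => m hm; apply: HN => //; rewrite mem_enum.
elim: (enum T) => [|x s [N HN]]; first by exists 0.
case: (classic (forall n, exists k, n <= k /\ u k = x)) => [x_rec|].
  exists N => m hm; rewrite inE => /orP[/eqP->|]; [exact: x_rec | exact: HN].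
move=> /not_all_ex_not[n0 x_late]; exists (maxn N n0) => m.
rewrite geq_max => /andP[hN hn0]; rewrite inE => /orP[/eqP ux|]; last exact: HN.
by case: x_late; exists m.
Qed.

Lemma nondecreasing_from_lt (f : nat -> nat) N m m' :
  (forall k, N <= k -> f k <= f k.+1) -> N <= m -> f m < f m.+1 -> m < m' ->
  f m < f m'.
Proof.
move=> f_up hm lt_m hmm'; apply: leq_trans lt_m _.
have g_up : {homo (fun k => f (m.+1 + k)) : i j / i <= j >-> i <= j}.
  apply: (@homo_leq _ _ (fun i j : nat => i <= j)) => [//|y x z|i].
  - exact: leq_trans.
  - by rewrite addnS; apply: f_up; lia.
by have := g_up 0 (m' - m.+1) isT; rewrite addn0 subnKC.
Qed.

Section Translation.
Variables (F V O : finType) (Q : qnp F V O).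
Local Notation state := (tstate F V).
Local Notation N := (nV V).

Lemma tstate_eq (t1 t2 : state) :
  sF t1 = sF t2 -> sZ t1 = sZ t2 -> sIn t1 = sIn t2 -> sDepth t1 = sDepth t2 ->
  sIndex t1 = sIndex t2 -> sC t1 = sC t2 -> sCT t1 = sCT t2 -> t1 = t2.
Proof. by case: t1 t2 => [? ? ? ? ? ? ?] [? ? ? ? ? ? ?] /= -> -> -> -> -> -> ->. Qed.

Definition depth (t : state) : nat := \max_(e : 'I_N.+1 | sDepth t e) e.

Lemma depth_onehot (t : state) (k : 'I_N.+1) :
  sDepth t = [ffun e => e == k] -> depth t = k.
Proof. by move=> Dt; rewrite /depth (big_pred1 k) // => e; rewrite Dt ffunE. Qed.

Record stack_inv (t : state) : Prop := StackInv {
  depth_is_onehot : exists k, sDepth t = [ffun e => e == k];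
  index_in : forall X d, sIndex t (X, d) -> sIn t X;
  index_lt_depth : forall X (d : 'I_N), sIndex t (X, d) -> d < depth t;
  index_uniq_level : forall X d d', sIndex t (X, d) -> sIndex t (X, d') -> d = d';
  index_uniq_var : forall X Y d, sIndex t (X, d) -> sIndex t (Y, d) -> X = Y }.

Lemma stack_inv_init t : init Q t -> stack_inv t.
Proof.
case=> _ _ Dt It _; split=> [|X d|X d|X d d'|X Y d]; rewrite ?It ?ffunE //.
by exists ord0.
Qed.

Lemma depth_at t j : stack_inv t -> j <= N -> sDepth t (inord j) -> depth t = j.
Proof.
move=> inv hj; have [k Dk] := depth_is_onehot inv.
by rewrite (depth_onehot Dk) Dk ffunE => /eqP <-; rewrite inordK.
Qed.

Lemma inord_eq i j : i <= N -> j <= N -> (inord i == inord j :> 'I_N.+1) = (i == j).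
Proof.
move=> hi hj; apply/eqP/eqP => [/(congr1 val)|->//].
by rewrite /= !inordK.
Qed.

Lemma push_spec t t' X (d : 'I_N) :
  stack_inv t -> tpre Q t (RPush O X d) -> teff Q t (RPush O X d) t' ->
  [/\ stack_inv t', depth t = d & depth t' = d.+1].
Proof.
move=> inv [inX [Dd _]] /= Et'.
have dt : depth t = d := depth_at inv (ltnW (ltn_ord d)) Dd.
have Dt' : sDepth t' = [ffun e => e == inord d.+1].
  have [k Dk] := depth_is_onehot inv.
  move: Dd; rewrite Et' Dk ffunE => /eqP ->; apply/ffunP => e; rewrite !ffunE.
  by case: eqP => //= _; case: eqP.
have dt' : depth t' = d.+1 by rewrite (depth_onehot Dt') inordK // ltnS.
have In' : sIn t' = upd (sIn t) X true by rewrite Et'.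
have Ix' Y e : sIndex t' (Y, e) = (Y == X) && (e == d) || sIndex t (Y, e).
  by rewrite Et' ffunE xpair_eqE; case: ifP.
have noX e : sIndex t (X, e) = false.
  by apply/negP => /(index_in inv); rewrite inX.
have nod Y : sIndex t (Y, d) = false.
  by apply/negP => /(index_lt_depth inv); rewrite dt ltnn.
split=> //; split=> [|Y e|Y e|Y e e'|Y Z e]; first by exists (inord d.+1).
- rewrite Ix' In' ffunE => /orP[/andP[/eqP-> _]|/(index_in inv)]; first by rewrite eqxx.
  by case: ifP.
- rewrite Ix' dt' => /orP[/andP[_ /eqP->]//|/(index_lt_depth inv)].
  by rewrite dt ltnS => /ltnW.
- rewrite !Ix'; case: (Y =P X) => [->|_] /=; last exact: (index_uniq_level inv).
  by rewrite !noX !orbF => /eqP-> /eqP->.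
- rewrite !Ix'; case: (e =P d) => [->|_]; rewrite ?andbF //=; last first.
    exact: (index_uniq_var inv).
  by rewrite !nod !andbT !orbF => /eqP-> /eqP->.
Qed.

Lemma pop_spec t t' X (d : 'I_N) :
  stack_inv t -> tpre Q t (RPop O X d) -> teff Q t (RPop O X d) t' ->
  [/\ stack_inv t', depth t = d.+1 & depth t' = d].
Proof.
move=> inv [_ [Ixd Dd]] /= Et'.
have dt : depth t = d.+1 := depth_at inv (ltn_ord d) Dd.
have Dt' : sDepth t' = [ffun e => e == inord d].
  have [k Dk] := depth_is_onehot inv.
  move: Dd; rewrite Et' Dk ffunE => /eqP ->; apply/ffunP => e; rewrite !ffunE.
  by case: eqP => //= _; case: eqP.
have dt' : depth t' = d by rewrite (depth_onehot Dt') inordK // ltnS ltnW.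
have In' : sIn t' = upd (sIn t) X false by rewrite Et'.
have Ix' Y e : sIndex t' (Y, e) = ~~ ((Y == X) && (e == d)) && sIndex t (Y, e).
  by rewrite Et' ffunE xpair_eqE; case: ifP.
split=> //; split=> [|Y e|Y e|Y e e'|Y Z e]; first by exists (inord d).
- rewrite Ix' In' ffunE => /andP[ne Ie]; case: (Y =P X) ne => [YX|_ _].
    by subst Y; rewrite (index_uniq_level inv Ie Ixd) !eqxx.
  exact: (index_in inv Ie).
- rewrite Ix' dt' => /andP[ne Ie]; have := index_lt_depth inv Ie.
  rewrite dt ltnS leq_eqVlt => /orP[/eqP/val_inj ed|//]; subst e.
  by move: ne; rewrite (index_uniq_var inv Ie Ixd) !eqxx.
- by rewrite !Ix' => /andP[_ Ie] /andP[_ Ie']; apply: (index_uniq_level inv Ie Ie').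
- by rewrite !Ix' => /andP[_ Ie] /andP[_ Ie']; apply: (index_uniq_var inv Ie Ie').
Qed.

Definition stack_op (b : raction V O) : bool :=
  match b with RPush _ _ | RPop _ _ => true | _ => false end.

Lemma teff_frame t b t' : teff Q t b t' -> ~~ stack_op b ->
  [/\ sIn t' = sIn t, sDepth t' = sDepth t & sIndex t' = sIndex t].
Proof. by case: b => // [|a|a X d] /=; [move-> | case | case]. Qed.

Lemma stack_inv_step t b t' :
  stack_inv t -> tpre Q t b -> teff Q t b t' -> stack_inv t'.
Proof.
move=> inv; case: b => [X d|X d||a|a X d] pre eff.
- by case: (push_spec inv pre eff).
- by case: (pop_spec inv pre eff).
all: have [In Dp Ix] := teff_frame eff isT.
all: by case: inv; split; rewrite /depth ?In ?Dp ?Ix.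
Qed.

Lemma depth_frame t b t' : teff Q t b t' -> ~~ stack_op b -> depth t' = depth t.
Proof. by move=> /teff_frame fr /fr[_ Dp _]; rewrite /depth Dp. Qed.

Lemma index_below_step t b t' X (e : 'I_N) :
  stack_inv t -> tpre Q t b -> teff Q t b t' -> e < depth t -> e < depth t' ->
  sIndex t' (X, e) = sIndex t (X, e).
Proof.
move=> inv; case: b => [X0 d|X0 d||a|a X0 d] pre eff lt lt'.
- have [_ dt _] := push_spec inv pre eff.
  rewrite eff /= ffunE; case: eqP => // -[_ ed].
  by move: lt; rewrite ed dt ltnn.
- have [_ _ dt'] := pop_spec inv pre eff.
  rewrite eff /= ffunE; case: eqP => // -[_ ed].
  by move: lt'; rewrite ed dt' ltnn.
all: by have [_ _ ->] := teff_frame eff isT.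
Qed.

Lemma sCT_step t b t' : tpre Q t b -> teff Q t b t' ->
  sCT t' = (if b is RMove then (sCT t).+1 else sCT t) :> nat.
Proof.
case: b => [X d|X d||a|a X d] /=.
- by move=> _ ->.
- by move=> _ ->.
- by move=> [_ ct_lt] ->; rewrite /= inordK // ltnS.
- by move=> _ [_ _ _ _ [_ ->]].
- by move=> _ [_ _ _ _ [_ ->]].
Qed.

Lemma push_counter_lt t t' X (d : 'I_N) :
  tpre Q t (RPush O X d) -> teff Q t (RPush O X d) t' ->
  sC t (inord d) < sC t' (inord d).
Proof.
move=> [_ [_ c_lt]] /= ->; rewrite /= !ffunE.
rewrite inord_eq ?(ltnW (ltn_ord d)) ?ltn_eqF // eqxx.
by rewrite inordK ltnS.
Qed.

Lemma counter_step t b t' e :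
  stack_inv t -> tpre Q t b -> teff Q t b t' -> e <= depth t ->
  (forall a X d, b = RDec a X d -> e <= d) -> sC t (inord e) <= sC t' (inord e).
Proof.
move=> inv; case: b => [X d|X d||a|a X d] pre eff he hdec.
- have [_ dt _] := push_spec inv pre eff.
  case: (e =P d) => [->|ne]; first exact: ltnW (push_counter_lt pre eff).
  have le_ed : e <= d by rewrite -dt.
  have le_dN : d <= N := ltnW (ltn_ord d).
  rewrite eff /= !ffunE !inord_eq ?(leq_trans le_ed) //.
  by rewrite (ltn_eqF (le_ed : e < d.+1)); case: eqP.
- by move: eff => ->.
- by move: eff => ->.
- by case: eff => _ _ _ _ [-> _].
- case: eff => _ _ _ _ [-> _]; have le_ed := hdec a X d erefl.
  have e_lt : e < N.+1 by rewrite ltnS (leq_trans le_ed) // ltnW.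
  by rewrite ffunE inordK // ltnNge le_ed.
Qed.

Lemma qeff_rel_functional a t t1 t2 : ~~ hasDec Q a ->
  qeff_rel Q a t t1 -> qeff_rel Q a t t2 -> sF t1 = sF t2 /\ sZ t1 = sZ t2.
Proof.
move=> /existsPn noDec [set1 keep1 num1] [set2 keep2 num2]; split; apply/ffunP.
- move=> p; case E1: ((p, true) \in qEff Q a).
    by rewrite (set1 _ _ E1) (set2 _ _ E1).
  case E0: ((p, false) \in qEff Q a); first by rewrite (set1 _ _ E0) (set2 _ _ E0).
  by rewrite keep1 ?keep2 ?E0 ?E1.
- move=> Y; have := noDec Y; have := num1 Y; have := num2 Y.
  by case: (qN Q a Y) => [[]|] // -> ->.
Qed.

Lemma RAct_teff_functional t a t1 t2 : ~~ hasDec Q a ->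
  teff Q t (RAct V a) t1 -> teff Q t (RAct V a) t2 -> t1 = t2.
Proof.
move=> na [q1 In1 Dp1 Ix1 [C1 CT1]] [q2 In2 Dp2 Ix2 [C2 CT2]].
have [Fs Zs] := qeff_rel_functional na q1 q2.
by apply: tstate_eq => //; congruence.
Qed.

Lemma decX_RDec (b : taction Q) a X d : sval b = RDec a X d -> decX X b.
Proof. by move=> bE; have := svalP b; rewrite /decX bE. Qed.

Lemma tpre_not_incX t (b : taction Q) X : tpre Q t (sval b) -> sIn t X -> ~~ incX X b.
Proof.
rewrite /incX; case: (sval b) => // [a [_ noInc]|a Y d [_ noInc _]] inX.
all: by case E: (qN Q a X) => [[]|] //; rewrite (noInc X E) in inX.
Qed.

Lemma eventually_recurrent_states (tau : nat -> state) :
  exists N0, forall m, N0 <= m -> inf_often tau (tau m).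
Proof.
pose code (t : state) := (sF t, sZ t, sIn t, sDepth t, sIndex t, sC t, sCT t).
have code_inj : injective code by move=> t1 t2 [*]; apply: tstate_eq.
have [N0 rec] := eventually_recurrent (code \o tau).
by exists N0 => m hm n; have [k [hk /code_inj]] := rec m hm n; exists k.
Qed.

End Translation.

Section Trajectory.
Variables (F V O : finType) (Q : qnp F V O) (pi : policy Q) (tau : nat -> tstate F V).
Hypothesis tau_traj : itraj pi tau.
Local Notation N := (nV V).

Lemma traj_some m : exists b, pi (tau m) = Some b.
Proof. by have [_ [b [pb _]]] := tau_traj.2 m; exists b. Qed.

Lemma traj_succ m b : pi (tau m) = Some b ->
  tpre Q (tau m) (sval b) /\ teff Q (tau m) (sval b) (tau m.+1).
Proof. by move=> pb; have [_ [b' []]] := tau_traj.2 m; rewrite pb => -[<-]. Qed.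

Lemma traj_stack_inv m : stack_inv (tau m).
Proof.
elim: m => [|m IH]; first exact: stack_inv_init tau_traj.1.
by have [b /traj_succ[pre eff]] := traj_some m; apply: stack_inv_step IH pre eff.
Qed.

Variable N0 : nat.
Hypothesis tau_rec : forall m, N0 <= m -> inf_often tau (tau m).

Lemma recurrent_no_increase (c : tstate F V -> nat) m :
  (forall k, N0 <= k -> c (tau k) <= c (tau k.+1)) -> N0 <= m ->
  c (tau m) < c (tau m.+1) -> False.
Proof.
move=> up hm lt; have [k [hk Ek]] := tau_rec hm m.+1.
by have := nondecreasing_from_lt (f := c \o tau) up hm lt hk; rewrite /= Ek ltnn.
Qed.

Lemma recurrent_no_move m b : N0 <= m -> pi (tau m) = Some b -> sval b <> RMove V O.
Proof.
move=> hm pb bE; apply: (recurrent_no_increase (c := fun t => sCT t) _ hm).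
  move=> k _; have [b' /traj_succ[pre eff]] := traj_some k.
  by rewrite (sCT_step pre eff); case: (sval b') => *; rewrite ?leqnn ?leqnSn.
by have [pre eff] := traj_succ pb; rewrite (sCT_step pre eff) bE.
Qed.

Variable m0 : nat.
Hypotheses (N0_m0 : N0 <= m0)
  (m0_min : forall m, N0 <= m -> depth (tau m0) <= depth (tau m)).
Local Notation d0 := (depth (tau m0)).

Lemma index_frozen X (d : 'I_N) m : d < d0 -> N0 <= m ->
  sIndex (tau m) (X, d) = sIndex (tau N0) (X, d).
Proof.
move=> lt /subnKC <-; elim: (m - N0) => [|k IH]; first by rewrite addn0.
have [b /traj_succ[pre eff]] := traj_some (N0 + k).
rewrite addnS (index_below_step X (traj_stack_inv _) pre eff) //.
- exact: leq_trans lt (m0_min (leq_addr _ _)).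
- exact: leq_trans lt (m0_min (leqW (leq_addr _ _))).
Qed.

Section NoLowDec.
Hypothesis no_low_dec : forall m b a X (d : 'I_N),
  N0 <= m -> pi (tau m) = Some b -> sval b = RDec a X d -> d0 <= d.

Lemma counter_min_nondecreasing k : N0 <= k ->
  sC (tau k) (inord d0) <= sC (tau k.+1) (inord d0).
Proof.
move=> hk; have [b pb] := traj_some k; have [pre eff] := traj_succ pb.
apply: (counter_step (traj_stack_inv k) pre eff (m0_min hk)) => a X d bE.
exact: no_low_dec hk pb bE.
Qed.

Lemma no_push_at_min m b X d : N0 <= m -> pi (tau m) = Some b ->
  sval b = RPush O X d -> depth (tau m) <> d0.
Proof.
move=> hm pb bE dm.
apply: (recurrent_no_increase (c := fun t => sC t (inord d0))
          counter_min_nondecreasing hm).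
have [pre eff] := traj_succ pb; rewrite bE in pre eff.
have [_ dt _] := push_spec (traj_stack_inv m) pre eff.
by rewrite -dm dt; apply: push_counter_lt pre eff.
Qed.

Lemma depth_stays_min k : m0 <= k -> depth (tau k) = d0.
Proof.
move=> /subnKC <-; elim: (k - m0) => [|k' IH]; first by rewrite addn0.
have [b pb] := traj_some (m0 + k'); have [pre eff] := traj_succ pb.
have hN : N0 <= m0 + k' by lia.
rewrite addnS; case E: (sval b) pre eff => [X d|X d||a|a X d] pre eff.
- by case: (no_push_at_min hN pb E IH).
- have [_ dt dt'] := pop_spec (traj_stack_inv _) pre eff.
  have := m0_min (leqW hN); rewrite dt'; move: IH; rewrite dt; lia.
all: by rewrite (depth_frame eff).
Qed.

Lemma step_unique_from_min k t' : m0 <= k -> step pi (tau k) t' -> t' = tau k.+1.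
Proof.
move=> hk [_ [b [pb [pre eff]]]]; have [pre' eff'] := traj_succ pb.
have hN : N0 <= k := leq_trans N0_m0 hk.
have inv := traj_stack_inv k.
case E: (sval b) pre eff pre' eff' => [X d|X d||a|a X d] pre eff pre' eff'.
- by case: (no_push_at_min hN pb E (depth_stays_min hk)).
- have [_ dt dt'] := pop_spec inv pre' eff'.
  move: (depth_stays_min hk) (depth_stays_min (leqW hk)).
  by rewrite dt dt' => <- /eqP; rewrite (ltn_eqF (ltnSn d)).
- by case: (recurrent_no_move hN pb E).
- by apply: (RAct_teff_functional _ eff eff'); have := svalP b; rewrite E.
- case: pre => _ _ /(index_lt_depth inv).
  by rewrite (depth_stays_min hk) ltnNge (no_low_dec hN pb E).
Qed.

Lemma no_low_dec_absurd : strong_cyclic pi -> False.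
Proof.
move=> sc; have [sigma [m [s0 sigma_traj goal_m]]] :=
  sc tau m0 tau_traj.1 (fun i _ => tau_traj.2 i).
have follow i : i <= m -> sigma i = tau (m0 + i).
  elim: i => [|i IH] hi; first by rewrite addn0.
  rewrite addnS; apply: (step_unique_from_min (k := m0 + i)); first exact: leq_addr.
  by rewrite -IH; [apply: sigma_traj | apply: ltnW].
have [not_goal _] := tau_traj.2 (m0 + m).
by apply: not_goal; rewrite -follow.
Qed.

End NoLowDec.

Lemma exists_low_dec : strong_cyclic pi ->
  exists m b a X (d : 'I_N),
    [/\ N0 <= m, pi (tau m) = Some b, sval b = RDec a X d & d < d0].
Proof.
move=> sc; apply: NNPP => none; apply: (no_low_dec_absurd _ sc) => m b a X d hm pb bE.
by rewrite leqNgt; apply/negP => lt; apply: none; exists m, b, a, X, d.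
Qed.

Lemma low_index_in m1 X (d : 'I_N) m :
  N0 <= m1 -> sIndex (tau m1) (X, d) -> d < d0 -> N0 <= m -> sIn (tau m) X.
Proof.
move=> h1 Ix lt hm; apply: (index_in (traj_stack_inv m) (d := d)).
by rewrite (index_frozen _ lt hm) -(index_frozen _ lt h1).
Qed.

End Trajectory.

Theorem theorem11 (F V O : finType) (Q : qnp F V O) (pi : policy Q) :
  qnp_wf Q -> strong_cyclic pi -> P_terminating pi.
Proof.
move=> _ sc tau tau_traj.
have [N0 tau_rec] := eventually_recurrent_states tau.
have [m0 N0_m0 m0_min] := ex_argmin_from (fun m => depth (tau m)) N0.
have [m1 [b [a [X [d [hm1 pb bE lt]]]]]] :=
  exists_low_dec tau_traj tau_rec N0_m0 m0_min sc.
have [pre1 _] := traj_succ tau_traj pb; rewrite bE in pre1; case: pre1 => _ _ Ix1.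
exists X; split.
  by exists (tau m1), b; split; [exact: tau_rec | | exact: decX_RDec bE].
move=> t b' t_rec pb'; have [m [hm Et]] := t_rec N0; subst t.
have [pre _] := traj_succ tau_traj pb'.
exact: (tpre_not_incX pre (low_index_in tau_traj m0_min hm1 Ix1 lt hm)).
Qed.
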